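(* Let $q$ be a prime power, $r\mid(q-1)$ with $r\ge 3$, and $q/2\le\ell\le q-1$. The quantum Tamo–Barg code $\mathrm{CSS}(C,C)$ with parameters $q,r,\ell$ is a quantum locally recoverable code with locality $r$.
   Context: $[n]=\{0,\dots,n-1\}$, $\mathbb{F}_q^*=\mathbb{F}_q\setminus\{0\}$. For $S\subseteq\mathbb{Z}_{\ge0}$, $\mathbb{F}_q[X]^S=\{\sum_{i\in S}a_iX^i\}$, $\mathrm{ev}(f)=(f(x))_{x\in\mathbb{F}_q^*}$. Let $S=\{i\in[\ell]:i\not\equiv r-1\pmod r\}\cup\{i\in[q-1]:i\equiv1\pmod r\}$, $C=\mathrm{ev}(\mathbb{F}_q[X]^S)$; for $\ell\ge q/2$, $C^\perp\subseteq C$ and the quantum Tamo–Barg code is $\mathrm{CSS}(C,C)=\mathrm{span}\{\sum_{y\in C^\perp}|x+y\rangle:x\in C\}\subseteq(\mathbb{C}^q)^{\otimes(q-1)}$, with qudits indexed by $\mathbb{F}_q^*$. A quantum code $\mathcal{C}$ on qudit set $Q$ is locally recoverable with locality $r$ if for each $i\in Q$ there is $I_i\subseteq Q$ with $i\in I_i$, $|I_i|\le r$, and a quantum channel $\mathrm{Rec}_i$ from the qudits $I_i\setminus\{i\}$ to the qudits $I_i$ such that $(\mathrm{Rec}_i\otimes\mathrm{id})(\psi_{Q\setminus\{i\}})=\psi$ for every code state $\psi$ (here $\psi_B$ is the reduced density matrix on $B$). *)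

From HB Require Import structures.
From mathcomp Require Import all_boot all_order all_algebra all_field.
Set Implicit Arguments. Unset Strict Implicit. Unset Printing Implicit Defensive.
Import Order.TTheory GRing.Theory Num.Theory.
Local Open Scope ring_scope.

(* Qd : the set of qudits; A : the computational basis of one qudit    *)
(* (so each qudit is C^|A|).  a0 : an arbitrary default symbol, only   *)
(* used to make the gluing functions total (never used in the cases    *)
(* where the glued sets cover the target set).                         *)
(* A (unnormalised) vector of the full space is a function             *)
(* {ffun Qd -> A} -> algC (its coordinates in the computational basis);*)
(* an operator on the full space is given by its matrix entries        *)
(* <x|rho|y>.                                                          *)
Section Qudits.
Variables (Qd A : finType) (a0 : A).

Definition word := {ffun Qd -> A}.

Definition conf (S : {set Qd}) := {ffun {u : Qd | u \in S} -> A}.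

Definition ext (S : {set Qd}) (x : conf S) (u : Qd) : A :=
  if (insub u : option {v : Qd | v \in S}) is Some u' then x u' else a0.

Definition merge (S T : {set Qd}) (x : conf S) (y : conf T) (u : Qd) : A :=
  if u \in S then ext x u else ext y u.

Definition restr (S : {set Qd}) (z : Qd -> A) : conf S := [ffun u => z (val u)].

(* |x> (x) |y> for x on S and y on T, seen as a basis vector of U *)
Definition glue (U S T : {set Qd}) (x : conf S) (y : conf T) : conf U :=
  restr U (merge x y).

Definition glue_full (S T : {set Qd}) (x : conf S) (y : conf T) : word :=
  [ffun u => merge x y u].

Definition op (S : {set Qd}) := conf S -> conf S -> algC.
Definition full_op := word -> word -> algC.

Definition ptrace (T : {set Qd}) (rho : full_op) : op (~: T) :=
  fun a b => \sum_(z : conf T) rho (glue_full a z) (glue_full b z).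

(* A quantum channel from the qudits In to the qudits Out, in Kraus form:
   Kraus operators K k : H_In -> H_Out with sum_k K_k^dagger K_k = 1. *)
Definition is_channel (In Out : {set Qd}) (m : nat)
    (K : 'I_m -> conf Out -> conf In -> algC) : Prop :=
  forall a b : conf In,
    \sum_(k < m) \sum_(x : conf Out) (K k x a)^* * K k x b = (a == b)%:R.

(* (Chan (x) id_{~: Out}) applied to an operator sigma on the qudits
   Dom = In :|: ~: Out; the result is an operator on all qudits. *)
Definition chan_id (Dom In Out : {set Qd}) (m : nat)
    (K : 'I_m -> conf Out -> conf In -> algC) (sigma : op Dom) : full_op :=
  fun x y =>
    \sum_(k < m) \sum_(a : conf In) \sum_(b : conf In)
      K k (restr Out x) a
      * sigma (glue Dom a (restr (~: Out) x)) (glue Dom b (restr (~: Out) y))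
      * (K k (restr Out y) b)^*.

(* code states of a code (a subspace given by a predicate on vectors):
   density operators  sum_k |v_k><v_k|  with every v_k in the code
   (i.e. positive operators supported on the code space). *)
Definition code_state (inCode : (word -> algC) -> Prop) (psi : full_op) : Prop :=
  exists (m : nat) (v : 'I_m -> word -> algC),
    (forall k, inCode (v k)) /\
    forall x y, psi x y = \sum_(k < m) v k x * (v k y)^*.

Definition locally_recoverable (inCode : (word -> algC) -> Prop) (r : nat) : Prop :=
  forall i : Qd, exists I : {set Qd},
    [/\ i \in I, (#|I| <= r)%N &
      exists (m : nat) (K : 'I_m -> conf I -> conf (I :\ i) -> algC),
        is_channel K /\
        forall psi, code_state inCode psi ->
          forall x y : word,
            chan_id (Dom := ~: [set i]) K (ptrace (T := [set i]) psi) x y = psi x y].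

End Qudits.

Section TamoBarg.
Variable F : finFieldType.

Definition Fstar := {x : F | x != 0}.
Definition Fword := {ffun Fstar -> F}.

Definition TB_exp (q r l i : nat) : bool :=
  ((i < l) && (i %% r != r.-1))%N || ((i < q.-1) && (i %% r == 1))%N.

Definition TB_C (r l : nat) (w : Fword) : bool :=
  [exists c : {ffun 'I_#|F| -> F},
     [forall i : 'I_#|F|, ~~ TB_exp #|F| r l i ==> (c i == 0)] &&
     [forall u : Fstar, w u == (\sum_(i < #|F|) c i *: 'X^i : {poly F}).[val u]]].

Definition TB_Cperp (r l : nat) (y : Fword) : bool :=
  [forall w : Fword, TB_C r l w ==> (\sum_(u : Fstar) w u * y u == 0)].

(* CSS(C,C) = span { sum_{y in C^perp} |x + y> : x in C } *)
Definition TB_CSS (r l : nat) (v : Fword -> algC) : Prop :=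
  exists alpha : Fword -> algC,
    forall z : Fword,
      v z = \sum_(x : Fword | TB_C r l x)
              alpha x * \sum_(y : Fword | TB_Cperp r l y) (z == x + y)%:R.

End TamoBarg.

From Pilot Require Import Defs.
From HB Require Import structures.
From mathcomp Require Import all_boot all_order all_algebra all_field.
From mathcomp Require Import cyclic ring zify.
Set Implicit Arguments. Unset Strict Implicit. Unset Printing Implicit Defensive.
Import Order.TTheory GRing.Theory Num.Theory.
Local Open Scope ring_scope.

(* Let i be the erased qudit.  The evaluation h of
     P(X) = \sum_(j < (q-1)/r) (X^r / i^r)^j * X
   vanishes off the r points u with u^r = i^r, and h(i) = ((q-1)/r) * i <> 0.
   Its exponents are 1 mod r, so every product x * h with x in C is a sum of
   monomials X^e with r not dividing e, whose power sums over F^* vanish: h lies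
   in C^perp, and (having exponents in S) also in C.
   Hence every codeword of CSS(C,C) is invariant under z |-> z - s h and is
   supported on basis states z with <h, z> = 0.  The second fact determines the
   erased symbol from the others; the first restores the coherence destroyed by
   the partial trace: after reading off the erased value c, prepare the uniform
   superposition over the completions a + F h.  These q Kraus operators give the
   recovery channel on the qudits of that support. *)

Section Configurations.
Variables (Qd A : finType) (a0 : A).
Local Notation ext := (@ext Qd A a0).

Lemma extE (S : {set Qd}) (x : conf A S) u (Su : u \in S) : ext x u = x (exist _ u Su).
Proof. by rewrite /ext insubT. Qed.

Lemma ext_restr (S : {set Qd}) (w : Qd -> A) : {in S, ext (restr S w) =1 w}.
Proof. by move=> u Su; rewrite (extE _ Su) ffunE. Qed.

Lemma ext_notin (S : {set Qd}) (x : conf A S) u : u \notin S -> ext x u = a0.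
Proof. by move=> Su; rewrite /ext insubF //; apply/negbTE. Qed.

Lemma ext_inj (S : {set Qd}) (x y : conf A S) : {in S, ext x =1 ext y} -> x = y.
Proof.
by move=> exy; apply/ffunP => -[u Su]; have := exy u Su; rewrite !(extE _ Su).
Qed.

Lemma restr_eqP (S : {set Qd}) (w1 w2 : Qd -> A) :
  restr S w1 = restr S w2 <-> {in S, w1 =1 w2}.
Proof.
split=> [E u Su|E]; last by apply/ffunP => -[u Su]; rewrite !ffunE /= E.
by have := congr1 (fun x : conf A S => x (exist _ u Su)) E; rewrite !ffunE.
Qed.

Lemma sum_conf1 (R : nmodType) (i : Qd) (G : A -> R) :
  \sum_(z : conf A [set i]) G (ext z i) = \sum_(t : A) G t.
Proof.
have const_conf : bijective (fun t : A => [ffun=> t] : conf A [set i]).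
  exists (fun z => ext z i) => [t|z]; first by rewrite (extE _ (set11 i)) ffunE.
  apply/ffunP => -[v iv]; rewrite ffunE; have := iv; rewrite inE => /eqP Ev; subst v.
  by rewrite (extE _ iv).
rewrite (reindex _ (onW_bij _ const_conf)) /=.
by apply: eq_bigr => t _; rewrite (extE _ (set11 i)) ffunE.
Qed.

End Configurations.
Arguments ext_inj {Qd A} a0 [S x y].

Lemma sum_if_pred1 (R : pzSemiRingType) (T : finType) (P : pred T) (d : bool)
    (t0 : T) (c : R) (G : T -> R) :
  (forall t, P t = d && (t == t0)) ->
  \sum_t (if P t then c else 0) * G t = if d then c * G t0 else 0.
Proof.
case: d => P_t0; last by rewrite big1 // => t _; rewrite P_t0 mul0r.
rewrite (bigD1 t0) //= P_t0 eqxx big1 ?addr0 // => t /negbTE t_neq.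
by rewrite P_t0 t_neq mul0r.
Qed.

Section ErasureRecovery.
Variables (Qd : finType) (F : finFieldType) (i : Qd) (I : {set Qd}) (h : {ffun Qd -> F}).
Local Notation ext := (@ext Qd F 0).
Local Notation word := (word Qd F).

Definition hdot (w : Qd -> F) := \sum_u h u * w u.

Hypotheses (i_in_I : i \in I) (h_supp : forall u, u \notin I -> h u = 0)
  (h_i_neq0 : h i != 0) (hdot_hh : hdot h = 0).

Definition hshift (w : Qd -> F) (s : F) : word := [ffun u => w u - s * h u].

Definition set_erased (w : Qd -> F) (t : F) : word :=
  [ffun u => if u == i then t else w u].

Definition erased_value (a : conf F (I :\ i)) := - (h i)^-1 * hdot (ext a).

Definition completion (a : conf F (I :\ i)) (s : F) : conf F I :=
  restr I (fun u => ext a u + (if u == i then erased_value a else 0) + s * h u).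

Lemma hdot_restr (w : Qd -> F) : hdot (ext (restr (I :\ i) w)) = hdot w - h i * w i.
Proof.
rewrite /hdot [LHS](bigD1 i) //= [in RHS](bigD1 i) //= ext_notin ?setD11 //.
rewrite mulr0 add0r addrAC subrr add0r; apply: eq_bigr => u ui.
case uI: (u \in I); first by rewrite ext_restr // in_setD1 ui.
by rewrite h_supp ?uI // !mul0r.
Qed.

Lemma hdot_hshift w s : hdot (hshift w s) = hdot w.
Proof.
rewrite /hdot; under eq_bigr => u _ do rewrite ffunE mulrBr mulrCA.
by rewrite sumrB -mulr_sumr -/(hdot h) hdot_hh mulr0 subr0.
Qed.

Lemma hdot_set_erased w t : hdot (set_erased w t) = hdot w - h i * w i + h i * t.
Proof.
rewrite /hdot (bigD1 i) //= [in RHS](bigD1 i) //= ffunE eqxx.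
rewrite (eq_bigr (fun u => h u * w u)) => [|u /negbTE ui]; last by rewrite ffunE ui.
ring.
Qed.

Lemma completion_inj s : injective (completion ^~ s).
Proof.
move=> a b /restr_eqP eq_ab; apply: (ext_inj 0) => u Iiu.
have /= := eq_ab u (subsetP (subD1set I i) u Iiu).
by move: Iiu; rewrite in_setD1 => /andP[/negbTE -> _]; rewrite !addr0 => /addIr.
Qed.

Lemma completionP (x : Qd -> F) a s :
  (restr I x == completion a s) = (hdot x == 0) && (a == restr (I :\ i) (hshift x s)).
Proof.
have erased_hshift : x i - erased_value (restr (I :\ i) (hshift x s)) - s * h i
                     = (h i)^-1 * hdot x.
  rewrite /erased_value hdot_restr hdot_hshift ffunE; field; exact: h_i_neq0.
have hdot_eq0 : (hdot x == 0) = ((h i)^-1 * hdot x == 0).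
  by rewrite mulf_eq0 invr_eq0 (negbTE h_i_neq0).
apply/idP/idP => [/eqP/restr_eqP eq_x|/andP[/eqP hx0 /eqP ->]].
  have Ea : a = restr (I :\ i) (hshift x s).
    apply: (ext_inj 0) => u Iiu; rewrite ext_restr // ffunE.
    have /= -> := eq_x u (subsetP (subD1set I i) u Iiu).
    by move: Iiu; rewrite in_setD1 => /andP[/negbTE -> _]; rewrite addr0 addrK.
  subst a; rewrite eqxx andbT hdot_eq0 -erased_hshift (eq_x i i_in_I) /= eqxx.
  by rewrite ext_notin ?setD11 // add0r; apply/eqP; ring.
apply/eqP/restr_eqP => u Iu; case: (u =P i) => [->|/eqP ui].
  rewrite ext_notin ?setD11 // add0r; apply/eqP.
  by rewrite -subr_eq0 opprD addrA erased_hshift -hdot_eq0 hx0.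
by rewrite ext_restr ?in_setD1 ?ui // ffunE addr0 subrK.
Qed.

Definition kraus_scale : algC := (sqrtC #|F|%:R)^-1.

(* With c := enum_val k, the k-th Kraus operator sends |a> to
   kraus_scale * \sum_s |completion a s> if erased_value a = c, and to 0
   otherwise: the erased coordinate of X determines s. *)
Definition recovery_kraus (k : 'I_#|F|) (X : conf F I) (a : conf F (I :\ i)) : algC :=
  if X == completion a ((ext X i - enum_val k) / h i) then kraus_scale else 0.

Lemma kraus_scale_sqr : kraus_scale ^+ 2 * #|F|%:R = 1.
Proof.
rewrite exprVn sqrtCK mulVf // pnatr_eq0 -lt0n.
by apply/card_gt0P; exists 0.
Qed.

Lemma recovery_kraus_conj k X a : (recovery_kraus k X a)^* = recovery_kraus k X a.
Proof.
rewrite /recovery_kraus; case: ifP => _; last exact: conjC0.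
by rewrite geC0_conj // invr_ge0 sqrtC_ge0 ler0n.
Qed.

Lemma card_completions a :
  \sum_(k < #|F|) \sum_(X : conf F I)
     ((X == completion a ((ext X i - enum_val k) / h i))%:R : algC) = #|F|%:R.
Proof.
rewrite (reindex _ (onW_bij _ (enum_rank_bij F))) /=.
under eq_bigr do rewrite enum_rankK.
rewrite exchange_big /=.
transitivity (\sum_(X : conf F I) \sum_(s : F) ((X == completion a s)%:R : algC)).
  apply: eq_bigr => X _.
  have shift_bij : bijective (fun s : F => ext X i - s * h i).
    exists (fun c => (ext X i - c) / h i) => c; first by rewrite opprB addrC subrK mulfK.
    by rewrite mulfVK // opprB addrC subrK.
  rewrite (reindex _ (onW_bij _ shift_bij)) /=.
  by apply: eq_bigr => s _; rewrite opprB addrC subrK mulfK.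
have sum_pred1 s : \sum_(X : conf F I) ((X == completion a s)%:R : algC) = 1.
  by rewrite (bigD1 (completion a s)) //= eqxx big1 ?addr0 // => X /negbTE ->.
by rewrite exchange_big /=; under eq_bigr do rewrite sum_pred1; rewrite sumr_const.
Qed.

Lemma recovery_kraus_channel : is_channel recovery_kraus.
Proof.
move=> a b.
have kraus_prod k X : (recovery_kraus k X a)^* * recovery_kraus k X b =
   kraus_scale ^+ 2 * ((a == b)%:R * (X == completion a ((ext X i - enum_val k) / h i))%:R).
  rewrite recovery_kraus_conj /recovery_kraus.
  case: (a =P b) => [<-|neq_ab]; first by case: ifP; rewrite ?mulr0 ?mulr1.
  rewrite mul0r mulr0; case: ifP => [/eqP Xa|_]; last by rewrite mul0r.
  case: ifP => [/eqP|_]; last by rewrite mulr0.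
  by rewrite {1}Xa => /completion_inj/neq_ab.
under eq_bigr do under eq_bigr do rewrite kraus_prod.
under eq_bigr do rewrite -mulr_sumr -mulr_sumr.
rewrite -mulr_sumr -mulr_sumr card_completions mulrCA kraus_scale_sqr mulr1.
by case: (a == b).
Qed.

Section CodeState.
Variable psi : full_op Qd F.
Hypotheses
  (psi_hshift : forall (x y : word) s t, psi (hshift x s) (hshift y t) = psi x y)
  (psi_supp_l : forall x y : word, hdot x != 0 -> psi x y = 0)
  (psi_supp_r : forall x y : word, hdot y != 0 -> psi x y = 0).

Lemma glue_erased (x : Qd -> F) s (z : conf F [set i]) :
  glue_full 0 (glue 0 (~: [set i]) (restr (I :\ i) (hshift x s)) (restr (~: I) x)) z
  = set_erased (hshift x s) (ext z i).
Proof.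
apply/ffunP => u; rewrite !ffunE /Defs.merge; case: (u =P i) => [->|/eqP ui].
  by rewrite !inE eqxx.
rewrite !inE ui /= ext_restr ?inE ?ui // /Defs.merge; case: ifP => [Iiu|/negbT].
  by rewrite ext_restr // ffunE.
by rewrite !inE ui /= => uI; rewrite ext_restr ?inE // h_supp // mulr0 subr0.
Qed.

Lemma hshift_erased (x : word) c : hshift x ((x i - c) / h i) i = c.
Proof. by rewrite ffunE mulfVK // opprB addrC subrK. Qed.

Lemma set_erased_hshift (x : word) c :
  set_erased (hshift x ((x i - c) / h i)) c = hshift x ((x i - c) / h i).
Proof.
by apply/ffunP => u; rewrite ffunE; case: (u =P i) => [->|]; rewrite ?hshift_erased.
Qed.

Lemma ptrace_completion (x y : word) c : hdot x = 0 -> hdot y = 0 ->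
  ptrace 0 (T := [set i]) psi
    (glue 0 (~: [set i]) (restr (I :\ i) (hshift x ((x i - c) / h i))) (restr (~: I) x))
    (glue 0 (~: [set i]) (restr (I :\ i) (hshift y ((y i - c) / h i))) (restr (~: I) y))
  = psi x y.
Proof.
move=> hx0 hy0; rewrite /ptrace; under eq_bigr do rewrite !glue_erased.
rewrite (sum_conf1 0 i (fun t => psi (set_erased (hshift x ((x i - c) / h i)) t)
                                  (set_erased (hshift y ((y i - c) / h i)) t))).
rewrite (bigD1 c) //= big1 ?addr0; first by rewrite !set_erased_hshift psi_hshift.
move=> t tc; apply: psi_supp_l.
rewrite hdot_set_erased hdot_hshift hx0 hshift_erased sub0r addrC -mulrBr.
by rewrite mulf_eq0 negb_or h_i_neq0 subr_eq0.
Qed.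

Lemma recovery_kraus_correct (x y : word) :
  chan_id 0 (Dom := ~: [set i]) recovery_kraus (ptrace 0 (T := [set i]) psi) x y = psi x y.
Proof.
have recovered_term k : \sum_a \sum_b recovery_kraus k (restr I x) a
      * ptrace 0 (T := [set i]) psi (glue 0 (~: [set i]) a (restr (~: I) x))
                                    (glue 0 (~: [set i]) b (restr (~: I) y))
      * (recovery_kraus k (restr I y) b)^*
    = if (hdot x == 0) && (hdot y == 0) then kraus_scale ^+ 2 * psi x y else 0.
  under eq_bigr do under eq_bigr do rewrite recovery_kraus_conj mulrC.
  rewrite /recovery_kraus !(ext_restr 0 _ i_in_I).
  under eq_bigr do
    rewrite (sum_if_pred1 _ _ (fun b => completionP y b ((y i - enum_val k) / h i))).
  have pull (d : bool) (A B : algC) :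
      (if d then kraus_scale * (A * B) else 0) = A * (if d then kraus_scale * B else 0).
    by case: d; rewrite ?mulr0 // mulrCA.
  under eq_bigr do rewrite pull.
  rewrite (sum_if_pred1 _ _ (fun a => completionP x a ((x i - enum_val k) / h i))).
  case: (hdot x =P 0) => hx0; case: (hdot y =P 0) => hy0 //=; rewrite ?mulr0 //.
  by rewrite ptrace_completion // mulrA -expr2.
rewrite /chan_id (eq_bigr _ (fun k _ => recovered_term k)) sumr_const card_ord.
case: (hdot x =P 0) => [hx0|/eqP hx]; last by rewrite mul0rn psi_supp_l.
case: (hdot y =P 0) => [hy0|/eqP hy]; last by rewrite mul0rn psi_supp_r.
by rewrite -mulr_natr mulrAC kraus_scale_sqr mul1r.
Qed.

End CodeState.

Lemma erasure_recoverable (inCode : (word -> algC) -> Prop) :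
  (forall v, inCode v -> forall (z : word) s, v (hshift z s) = v z) ->
  (forall v, inCode v -> forall z : word, hdot z != 0 -> v z = 0) ->
  exists (m : nat) (K : 'I_m -> conf F I -> conf F (I :\ i) -> algC),
    is_channel K /\
    forall psi, code_state inCode psi -> forall x y : word,
      chan_id 0 (Dom := ~: [set i]) K (ptrace 0 (T := [set i]) psi) x y = psi x y.
Proof.
move=> code_hshift code_supp; exists #|F|, recovery_kraus.
split=> [|psi [m [v [v_code psi_def]]] x y]; first exact: recovery_kraus_channel.
apply: recovery_kraus_correct => [x' y' s t|x' y' hx|x' y' hy]; rewrite !psi_def.
- by apply: eq_bigr => k _; rewrite !code_hshift.
- by rewrite big1 // => k _; rewrite code_supp ?mul0r.
- by rewrite big1 // => k _; rewrite (code_supp _ _ y') ?conjC0 ?mulr0.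
Qed.

End ErasureRecovery.

Section FiniteField.
Variable F : finFieldType.

Let card_F_gt0 : (0 < #|F|)%N := ltnW (finNzRing_gt1 F).

Lemma natr_card : #|F|%:R = 0 :> F.
Proof.
have : \sum_(x : F) x = \sum_(x : F) (x + 1) by rewrite (reindex_inj (addIr 1)).
rewrite big_split /= sumr_const => /eqP.
by rewrite -subr_eq0 opprD addrA subrr sub0r oppr_eq0 => /eqP.
Qed.

Lemma natr_card_pred : #|F|.-1%:R = -1 :> F.
Proof. by apply/eqP; rewrite -subr_eq0 opprK natr1 prednK ?natr_card. Qed.

Lemma expf_card_pred (x : F) : x != 0 -> x ^+ #|F|.-1 = 1.
Proof.
move=> x0; apply: (mulfI x0).
by rewrite mulr1 -exprS prednK ?expf_card.
Qed.

Lemma card_Fstar : #|{: Fstar F}| = #|F|.-1.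
Proof. by rewrite card_sig -(cardC1 0); apply: eq_card => x; rewrite !inE. Qed.

Lemma Fstar_prim_root : exists g : Fstar F, #|F|.-1.-primitive_root (val g).
Proof.
have n_gt0 : (0 < #|F|.-1)%N.
  by rewrite -card_Fstar; apply/card_gt0P; exists (Sub 1 (oner_neq0 F)).
have /hasP[x /mapP[g _ ->] prim_g] :
    has #|F|.-1.-primitive_root (map val (enum {: Fstar F})).
  apply: has_prim_root => //.
  - by apply/allP => _ /mapP[u _ ->]; rewrite unity_rootE expf_card_pred ?(valP u).
  - by rewrite map_inj_uniq ?enum_uniq //; exact: val_inj.
  - by rewrite size_map -cardE card_Fstar.
by exists g.
Qed.

Lemma sum_Fstar_expr N : ~~ (#|F|.-1 %| N)%N -> \sum_(u : Fstar F) val u ^+ N = 0.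
Proof.
move=> nN; have [g prim_g] := Fstar_prim_root.
have gN : val g ^+ N != 1 by rewrite -(prim_order_dvd prim_g).
have mulg_inj : injective
    (fun u : Fstar F => Sub (val g * val u) (mulf_neq0 (valP g) (valP u)) : Fstar F).
  by move=> u v /(congr1 val) /(mulfI (valP g)) /val_inj.
have sum_fixed : \sum_(u : Fstar F) val u ^+ N = val g ^+ N * \sum_(u : Fstar F) val u ^+ N.
  by rewrite [LHS](reindex_inj mulg_inj) mulr_sumr; apply: eq_bigr => u _; exact: exprMn.
apply/eqP; move/eqP: sum_fixed; rewrite -subr_eq0 -{1}(mul1r (\sum_u _)) -mulrBl.
by rewrite mulf_eq0 subr_eq0 eq_sym (negbTE gN).
Qed.

Lemma natf_dvd_card_pred_neq0 d : (d %| #|F|.-1)%N -> d%:R != 0 :> F.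
Proof.
move=> /dvdnP[e def_n]; apply/eqP => d0; have := natr_card_pred.
by rewrite def_n natrM d0 mulr0 => /eqP; rewrite eq_sym oppr_eq0 oner_eq0.
Qed.

End FiniteField.

Lemma TB_exp_addn_mod1 q r l a k :
  (3 <= r)%N -> TB_exp q r l a -> (k %% r = 1)%N -> ~~ (r %| a + k)%N.
Proof.
move=> r_ge3 Sa k_mod; rewrite /dvdn -modnDm k_mod addn1.
have a_lt_r := ltn_pmod a (ltnW (ltnW r_ge3)).
case: (ltnP (a %% r).+1 r) => [lt_r|ge_r]; first by rewrite modn_small.
have a_mod : (a %% r = r.-1)%N by lia.
by move: Sa; rewrite /TB_exp a_mod eqxx andbF /= => /andP[_ /eqP]; lia.
Qed.

Section TamoBargCSS.
Variables (F : finFieldType) (r l : nat).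

Lemma TB_Cperp_addr (y y' : Fword F) :
  TB_Cperp r l y' -> TB_Cperp r l (y + y') = TB_Cperp r l y.
Proof.
move=> /forallP y'_perp; apply: eq_forallb => w.
case Cw: (TB_C r l w) => //=.
under eq_bigr do rewrite ffunE mulrDr.
by rewrite big_split /= (eqP (implyP (y'_perp w) Cw)) addr0.
Qed.

Lemma TB_Cperp_scale t (y : Fword F) : TB_Cperp r l y -> TB_Cperp r l [ffun u => t * y u].
Proof.
move=> /forallP y_perp; apply/forallP => w; apply/implyP => Cw.
under eq_bigr do rewrite ffunE mulrCA.
by rewrite -mulr_sumr (eqP (implyP (y_perp w) Cw)) mulr0.
Qed.

Lemma TB_CSS_hshift (h : Fword F) v : TB_Cperp r l h -> TB_CSS r l v ->
  forall (z : Fword F) s, v (hshift h z s) = v z.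
Proof.
move=> h_perp [alpha v_def] z s; rewrite !v_def; apply: eq_bigr => x _; congr (_ * _).
set d : Fword F := [ffun u => - s * h u].
have -> : hshift h z s = z + d by apply/ffunP => u; rewrite !ffunE mulNr.
rewrite (reindex_inj (addIr d)) /=.
apply: eq_big => y; first by rewrite TB_Cperp_addr // TB_Cperp_scale.
by rewrite addrA (inj_eq (addIr d)).
Qed.

Lemma TB_CSS_supp (h : Fword F) v : TB_C r l h -> TB_Cperp r l h -> TB_CSS r l v ->
  forall z : Fword F, hdot h z != 0 -> v z = 0.
Proof.
move=> Ch h_perp [alpha v_def] z hz; rewrite v_def big1 // => x Cx.
rewrite big1 ?mulr0 // => y y_perp; case: eqP => // z_def; move: hz.
have hx : \sum_u h u * x u = 0.
  by rewrite -[RHS](eqP (implyP (forallP h_perp x) Cx)); apply: eq_bigr => u _; rewrite mulrC.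
have hy : \sum_u h u * y u = 0 := eqP (implyP (forallP y_perp h) Ch).
rewrite z_def /hdot; under eq_bigr do rewrite [X in _ * X]ffunE mulrDr.
by rewrite big_split /= hx hy addr0 eqxx.
Qed.

End TamoBargCSS.

Section CheckVector.
Variables (F : finFieldType) (r : nat) (i : Fstar F).
Hypotheses (r_dvd : (r %| #|F|.-1)%N) (r_ge3 : (3 <= r)%N).
Local Notation m := (#|F|.-1 %/ r)%N.
Local Notation beta := (val i ^+ r).

Let r_mul_m : (r * m)%N = #|F|.-1.
Proof. by rewrite mulnC divnK. Qed.

Definition check_poly : {poly F} := \sum_(j < m) beta^-1 ^+ j *: 'X^(r * j + 1).

Definition check_vector : Fword F := [ffun u => check_poly.[val u]].

Definition recovery_set : {set Fstar F} := [set u | val u ^+ r == beta].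

Lemma beta_neq0 : beta != 0.
Proof. by rewrite expf_neq0 ?(valP i). Qed.

Lemma check_poly_horner x : check_poly.[x] = x * \sum_(j < m) (beta^-1 * x ^+ r) ^+ j.
Proof.
rewrite horner_sum mulr_sumr; apply: eq_bigr => j _.
by rewrite hornerZ hornerXn exprMn addn1 exprSr exprM; ring.
Qed.

Lemma check_poly_coef k : check_poly`_k != 0 -> (k %% r == 1)%N && (k < #|F|.-1)%N.
Proof.
apply: contraR => /negP k_out; rewrite coef_sumMXn big1 // => j /eqP k_def.
exfalso; apply: k_out; rewrite -k_def mulnC modnMDl modn_small; last by lia.
rewrite eqxx /=; have := ltn_ord j; have := r_mul_m.
move: (nat_of_ord j) => j'; move: (#|F|.-1 %/ r)%N => m'; move: #|F|.-1 => n'.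
nia.
Qed.

Lemma check_vector_out u : u \notin recovery_set -> check_vector u = 0.
Proof.
rewrite inE ffunE check_poly_horner => u_out.
set w := beta^-1 * val u ^+ r.
have w_neq1 : w != 1.
  apply: contra u_out => /eqP w1; apply/eqP.
  by rewrite -(mulVKf beta_neq0 (val u ^+ r)) -/w w1 mulr1.
have w_m : w ^+ m = 1.
  rewrite /w exprMn exprVn -!exprM r_mul_m.
  by rewrite !expf_card_pred ?(valP u) ?(valP i) // invr1 mulr1.
have := subrX1 w m; rewrite w_m subrr => /esym/eqP.
by rewrite mulf_eq0 subr_eq0 (negbTE w_neq1) /= => /eqP ->; rewrite mulr0.
Qed.

Lemma check_vector_erased : check_vector i != 0.
Proof.
rewrite ffunE check_poly_horner mulVf ?beta_neq0 //.
under eq_bigr do rewrite expr1n.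
rewrite sumr_const card_ord mulf_neq0 ?(valP i) // natf_dvd_card_pred_neq0 //.
by rewrite -{2}r_mul_m dvdn_mull.
Qed.

Lemma card_recovery_set : (#|recovery_set| <= r)%N.
Proof.
have r_gt0 : (0 < r)%N by lia.
have roots : all (root ('X^r - beta%:P)) (map val (enum recovery_set)).
  apply/allP => x /mapP[u]; rewrite mem_enum inE => /eqP u_r ->.
  by rewrite /root !hornerE u_r subrr.
have := max_poly_roots _ roots; rewrite size_XnsubC // size_map -cardE ltnS.
apply; last by rewrite map_inj_uniq ?enum_uniq //; exact: val_inj.
by rewrite -size_poly_eq0 size_XnsubC.
Qed.

Lemma check_vector_C l : TB_C r l check_vector.
Proof.
apply/existsP; exists [ffun k : 'I_#|F| => check_poly`_k]; apply/andP; split.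
  apply/forallP => k; apply/implyP; rewrite ffunE.
  by apply: contraNT => /check_poly_coef/andP[k1 k_lt]; rewrite /TB_exp k1 k_lt orbT.
have -> : \sum_(k < #|F|) [ffun k : 'I_#|F| => check_poly`_k] k *: 'X^k = check_poly.
  under eq_bigr do rewrite ffunE.
  rewrite -poly_def; apply/polyP => k; rewrite coef_poly.
  case: ltnP => // k_ge; apply/esym/eqP; apply: contraTT k_ge => /check_poly_coef/andP[_ k_lt].
  by rewrite -ltnNge (leq_trans k_lt) ?leq_pred.
by apply/forallP => u; rewrite ffunE.
Qed.

Lemma check_vector_Cperp l : TB_Cperp r l check_vector.
Proof.
apply/forallP => w; apply/implyP => /existsP[c /andP[/forallP c_supp /forallP w_def]].
rewrite (eq_bigr (fun u => \sum_(a < #|F|) \sum_(k < size check_poly)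
            c a * check_poly`_k * val u ^+ (a + k))); last first.
  move=> u _; rewrite (eqP (w_def u)) ffunE horner_sum horner_coef mulr_suml.
  apply: eq_bigr => a _; rewrite hornerZ hornerXn mulr_sumr.
  by apply: eq_bigr => k _; rewrite exprD mulrACA.
rewrite exchange_big /=; under eq_bigr do rewrite exchange_big /=.
apply/eqP/big1 => a _; apply: big1 => k _; rewrite -mulr_sumr.
have [->|ca] := eqVneq (c a) 0; first by rewrite !mul0r.
have [->|pk] := eqVneq check_poly`_k 0; first by rewrite mulr0 mul0r.
have Sa : TB_exp #|F| r l a by apply: contraR ca => /(implyP (c_supp a)).
have /andP[/eqP k_mod _] := check_poly_coef pk.
rewrite sum_Fstar_expr ?mulr0 //.
exact: contra (dvdn_trans r_dvd) (TB_exp_addn_mod1 r_ge3 Sa k_mod).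
Qed.

End CheckVector.

Unset Implicit Arguments.

Theorem corollary5p8 (F : finFieldType) (r l : nat) :
  (r %| #|F|.-1)%N -> (3 <= r)%N ->
  (#|F| <= 2 * l)%N -> (l <= #|F|.-1)%N ->
  @locally_recoverable (Fstar F) F 0 (@TB_CSS F r l) r.
Proof.
move=> r_dvd r_ge3 _ _ i.
have h_C := check_vector_C i r_dvd r_ge3 l.
have h_perp := check_vector_Cperp i r_dvd r_ge3 l.
exists (recovery_set r i); split; first by rewrite inE.
  exact: card_recovery_set.
apply: erasure_recoverable.
- by rewrite inE.
- exact: check_vector_out.
- exact: check_vector_erased.
- exact: eqP (implyP (forallP h_perp _) h_C).
- by move=> v /(TB_CSS_hshift h_perp).
- by move=> v /(TB_CSS_supp h_C h_perp).
Qed.
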